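(* Let $S\subset\mathbb R^2$ be a finite set of $n>4$ points, none of which lies at the center $O$ of SED$(S)$, and with no two points on a common ray from $O$. If $S$ is both Pre-regular and Equiangular, then $S$ is Regular, i.e., its points are the vertices of a regular $n$-gon.
   Context: SED$(S)$ is the smallest closed disk containing $S$, SEC$(S)$ its boundary circle, and $O$ its center. $S$ is \emph{Pre-regular} if there is a regular $n$-gon $P$ (the supporting polygon) such that for every pair of adjacent edges of $P$, one of the two edges contains exactly two points of $S$ (possibly at its endpoints) and the relative interior of the other edge contains no point of $S$. $S$ is \emph{Equiangular} if, listing the points of $S$ as $p_0,\dots,p_{n-1}$ in cyclic order around $O$, every angle $\angle p_iOp_{i+1}$ (indices mod $n$) equals $2\pi/n$. *)

From Stdlib Require Export Reals Lra Lia List.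
Export ListNotations.
Open Scope R_scope.

Definition pt : Type := (R * R)%type.

Definition dist (p q : pt) : R :=
  sqrt ((fst p - fst q) ^ 2 + (snd p - snd q) ^ 2).

Definition is_SED (P : list pt) (O : pt) (r : R) : Prop :=
  (forall p, In p P -> dist p O <= r) /\
  (forall (c : pt) (r' : R), (forall p, In p P -> dist p c <= r') -> r <= r').

Definition no_common_ray (P : list pt) (O : pt) : Prop :=
  forall p q, In p P -> In q P -> p <> q ->
    ~ (exists l, 0 < l /\ fst q - fst O = l * (fst p - fst O)
                      /\ snd q - snd O = l * (snd p - snd O)).

Definition reg_vertex (n : nat) (c : pt) (rad th : R) (k : nat) : pt :=
  (fst c + rad * cos (th + 2 * PI * INR k / INR n),
   snd c + rad * sin (th + 2 * PI * INR k / INR n)).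

Definition on_segment (a b x : pt) : Prop :=
  exists t, 0 <= t <= 1 /\
    x = (fst a + t * (fst b - fst a), snd a + t * (snd b - snd a)).

Definition in_relint (a b x : pt) : Prop :=
  exists t, 0 < t < 1 /\
    x = (fst a + t * (fst b - fst a), snd a + t * (snd b - snd a)).

Definition exactly_two (P : list pt) (a b : pt) : Prop :=
  exists p q, p <> q /\ In p P /\ In q P /\ on_segment a b p /\ on_segment a b q /\
    (forall x, In x P -> on_segment a b x -> x = p \/ x = q).

Definition empty_relint (P : list pt) (a b : pt) : Prop :=
  forall x, In x P -> ~ in_relint a b x.

(* Pre-regular: there is a regular n-gon (n = |S|), whose edges are
   [v_k, v_{(k+1) mod n}], such that for every pair of adjacent edges
   (edge k, edge (k+1) mod n), one contains exactly two points of S and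
   the relative interior of the other contains no point of S. *)
Definition pre_regular (P : list pt) : Prop :=
  let n := length P in
  exists (c : pt) (rad th : R), 0 < rad /\
    forall k, (k < n)%nat ->
      let v := reg_vertex n c rad th in
      let k1 := Nat.modulo (S k) n in
      let k2 := Nat.modulo (S k1) n in
      (exactly_two P (v k) (v k1) /\ empty_relint P (v k1) (v k2)) \/
      (exactly_two P (v k1) (v k2) /\ empty_relint P (v k) (v k1)).

Definition angle (a O b : pt) : R :=
  let ux := fst a - fst O in let uy := snd a - snd O in
  let wx := fst b - fst O in let wy := snd b - snd O in
  acos ((ux * wx + uy * wy) / (sqrt (ux ^ 2 + uy ^ 2) * sqrt (wx ^ 2 + wy ^ 2))).

(* Equiangular: listing the points of S as p_0, ..., p_{n-1} in cyclic
   (counterclockwise) order around O -- i.e. with polar angles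
   th_0 < th_1 < ... < th_{n-1} < th_0 + 2 PI -- every angle
   p_i O p_{(i+1) mod n} equals 2 PI / n. *)
Definition equiangular (P : list pt) (O : pt) : Prop :=
  let n := length P in
  exists (p : nat -> pt) (rho th : nat -> R),
    (forall x, In x P <-> exists i, (i < n)%nat /\ p i = x) /\
    (forall i, (i < n)%nat -> 0 < rho i /\
        p i = (fst O + rho i * cos (th i), snd O + rho i * sin (th i))) /\
    (forall i, (S i < n)%nat -> th i < th (S i)) /\
    (th (pred n) < th 0%nat + 2 * PI) /\
    (forall i, (i < n)%nat ->
        angle (p i) O (p (Nat.modulo (S i) n)) = 2 * PI / INR n).

Definition regular (P : list pt) : Prop :=
  let n := length P in
  exists (c : pt) (rad th : R), 0 < rad /\
    forall x, In x P <-> exists k, (k < n)%nat /\ x = reg_vertex n c rad th k.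

From Stdlib Require Import ZArith Classical_Prop.
Open Scope R_scope.

(* Write the points of S in polar form about O: equiangularity forces
   consecutive polar angles to differ by exactly 2 PI / n.  If two points of S
   lie on a common edge of the supporting polygon P, their angular separation
   seen from O is a positive multiple of 2 PI / n, so (by a tangent estimate)
   they are at least 2 d tan (PI / n) apart, where d is the signed distance
   from O to the line of the edge.  As the edge has length 2 R sin (PI / n),
   d is at most the apothem R cos (PI / n): O - c has a nonnegative component
   along the apothem direction of every full edge, c being the centre of P.
   Of two adjacent edges one is full, and for n > 4 some two consecutive
   apothem directions both point away from any O <> c, so O = c.  Then d
   equals the apothem, the two points of a full edge are its endpoints, every
   vertex of P is an endpoint of a full edge, and S, having n points, is the
   vertex set of P. *)

Definition polar (c : pt) (r t : R) : pt := (fst c + r * cos t, snd c + r * sin t).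

Definition seg (a b : pt) (t : R) : pt :=
  (fst a + t * (fst b - fst a), snd a + t * (snd b - snd a)).

Definition dir_coord (u : R) (c x : pt) : R :=
  cos u * (fst x - fst c) + sin u * (snd x - snd c).

Definition perp_coord (u : R) (c x : pt) : R :=
  - sin u * (fst x - fst c) + cos u * (snd x - snd c).

Definition apothem_dir (n : nat) (th : R) (K : nat) : R :=
  th + 2 * PI * INR K / INR n + PI / INR n.

Definition full_edge (X : list pt) (c : pt) (rad th : R) (K : nat) : Prop :=
  exactly_two X (reg_vertex (length X) c rad th K)
                (reg_vertex (length X) c rad th (S K)).

Lemma seg_0 (a b : pt) : seg a b 0 = a.
Proof. destruct a; unfold seg; simpl; f_equal; ring. Qed.

Lemma seg_1 (a b : pt) : seg a b 1 = b.
Proof. destruct a, b; unfold seg; simpl; f_equal; ring. Qed.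

Lemma dir_coord_polar u c O r g :
  dir_coord u c (polar O r g) = dir_coord u c O + r * cos (g - u).
Proof. unfold dir_coord, polar; simpl. rewrite cos_minus. ring. Qed.

Lemma perp_coord_polar u c O r g :
  perp_coord u c (polar O r g) = perp_coord u c O + r * sin (g - u).
Proof. unfold perp_coord, polar; simpl. rewrite sin_minus. ring. Qed.

Lemma norm_polar r t : 0 < r -> sqrt ((r * cos t) ^ 2 + (r * sin t) ^ 2) = r.
Proof.
  intros Hr.
  replace ((r * cos t) ^ 2 + (r * sin t) ^ 2) with (r ^ 2 * ((sin t)² + (cos t)²))
    by (unfold Rsqr; ring).
  rewrite sin2_cos2, Rmult_1_r. apply sqrt_pow2. lra.
Qed.

Lemma angle_polar O r1 r2 t1 t2 : 0 < r1 -> 0 < r2 ->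
  angle (polar O r1 t1) O (polar O r2 t2) = acos (cos (t1 - t2)).
Proof.
  intros H1 H2. unfold angle, polar; cbn [fst snd]. f_equal.
  replace (fst O + r1 * cos t1 - fst O) with (r1 * cos t1) by ring.
  replace (snd O + r1 * sin t1 - snd O) with (r1 * sin t1) by ring.
  replace (fst O + r2 * cos t2 - fst O) with (r2 * cos t2) by ring.
  replace (snd O + r2 * sin t2 - snd O) with (r2 * sin t2) by ring.
  rewrite !norm_polar by assumption. rewrite cos_minus. field. lra.
Qed.

Lemma polar_of_ne (c x : pt) : x <> c -> exists r b, 0 < r /\ x = polar c r b.
Proof.
  intros Hne.
  set (x1 := fst x - fst c). set (x2 := snd x - snd c).
  assert (Hpos : 0 < x1 ^ 2 + x2 ^ 2).
  { destruct (Req_dec x1 0) as [h1|h1]; [destruct (Req_dec x2 0) as [h2|h2]|].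
    - exfalso. apply Hne. destruct x, c; unfold x1, x2 in *; simpl in *.
      f_equal; lra.
    - assert (0 < x2 * x2) by (apply Rsqr_pos_lt; exact h2). nra.
    - assert (0 < x1 * x1) by (apply Rsqr_pos_lt; exact h1). nra. }
  set (r := sqrt (x1 ^ 2 + x2 ^ 2)).
  assert (Hr : 0 < r) by (apply sqrt_lt_R0; exact Hpos).
  assert (Hr2 : r * r = x1 ^ 2 + x2 ^ 2) by (apply sqrt_sqrt; lra).
  set (y := x1 / r).
  assert (Hy : -1 <= y <= 1).
  { unfold y. split; apply Rmult_le_reg_r with r; try lra;
      unfold Rdiv; rewrite Rmult_assoc, Rinv_l by lra; nra. }
  assert (Hs : sqrt (1 - y²) = Rabs x2 / r).
  { assert (E : 1 - y² = (Rabs x2 / r) ^ 2).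
    { unfold y, Rsqr. rewrite <- (pow2_abs x2) in Hr2. field_simplify; [|lra|lra].
      f_equal. simpl in *. lra. }
    rewrite E. apply sqrt_pow2. apply Rmult_le_pos; [apply Rabs_pos|].
    left; apply Rinv_0_lt_compat; lra. }
  assert (Hx : x = (fst c + x1, snd c + x2))
    by (destruct x; unfold x1, x2; simpl; f_equal; ring).
  destruct (Rle_dec 0 x2) as [h|h].
  - exists r, (acos y). split; [exact Hr|]. rewrite Hx. unfold polar. f_equal.
    + rewrite cos_acos by exact Hy. unfold y. field. lra.
    + rewrite sin_acos by exact Hy. rewrite Hs, Rabs_right by lra. field. lra.
  - exists r, (- acos y). split; [exact Hr|]. rewrite Hx. unfold polar. f_equal.
    + rewrite cos_neg, cos_acos by exact Hy. unfold y. field. lra.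
    + rewrite sin_neg, sin_acos by exact Hy. rewrite Hs, Rabs_left by lra. field. lra.
Qed.

Lemma cos_eq_cases al D : 0 < al <= PI -> 0 < D < 2 * PI -> cos D = cos al ->
  D = al \/ D = 2 * PI - al.
Proof.
  intros Ha HD Hc. destruct (Rle_dec D PI) as [Hle|Hgt].
  - left. apply cos_inj; lra.
  - right. assert (E : cos (2 * PI - D) = cos D).
    { rewrite cos_minus, cos_2PI, sin_2PI. ring. }
    assert (2 * PI - D = al) by (apply cos_inj; lra). lra.
Qed.

Lemma cos_mul_cos_le x y b : x - y = 2 * b -> cos x * cos y <= cos b * cos b.
Proof.
  intros E.
  assert (Hm : cos (x - y) = 2 * cos b * cos b - 1) by (rewrite E; apply cos_2a_cos).
  assert (Hp := COS_bound (x + y)).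
  rewrite cos_minus in Hm. rewrite cos_plus in Hp. lra.
Qed.

Lemma tan_abs_ge a b : 0 < a < PI / 2 -> a <= b <= PI - a ->
  sin a * (cos b * cos b) <= cos a * sin b * Rabs (cos b).
Proof.
  intros Ha Hb. destruct (Rle_dec 0 (cos b)) as [Hc|Hc].
  - rewrite Rabs_right by lra.
    assert (Hs : 0 <= sin (b - a)) by (apply sin_ge_0; lra).
    rewrite sin_minus in Hs. nra.
  - rewrite Rabs_left by lra.
    assert (Hs : 0 <= sin (b + a)) by (apply sin_ge_0; lra).
    rewrite sin_plus in Hs. nra.
Qed.

Lemma chord_tan_bound a b A B gp gq d :
  0 < a < PI / 2 -> a <= b <= PI - a -> 0 < A -> 0 < B -> 0 < d ->
  A * cos gp = d -> B * cos gq = d -> gp - gq = 2 * b ->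
  2 * d * sin a <= cos a * Rabs (A * sin gp - B * sin gq).
Proof.
  intros Ha Hb HA HB Hd Hp Hq Hg.
  assert (Hpi := PI_RGT_0).
  assert (Hsa : 0 < sin a) by (apply sin_gt_0; lra).
  assert (Hca : 0 < cos a) by (apply cos_gt_0; lra).
  assert (Hsb : 0 <= sin b) by (apply sin_ge_0; lra).
  assert (Hcp : 0 < cos gp) by nra.
  assert (Hcq : 0 < cos gq) by nra.
  set (S := A * sin gp - B * sin gq).
  set (P := cos gp * cos gq).
  assert (HP : 0 < P) by (unfold P; nra).
  assert (ESP : S * P = 2 * d * sin b * cos b).
  { assert (E : S * P - d * sin (gp - gq) =
              sin gp * cos gq * (A * cos gp - d) - sin gq * cos gp * (B * cos gq - d))
      by (unfold S, P; rewrite sin_minus; ring).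
    rewrite Hp, Hq, Hg, sin_2a in E. lra. }
  assert (HSP : Rabs S * P = 2 * d * (sin b * Rabs (cos b))).
  { rewrite <- (Rabs_right P) by lra. rewrite <- Rabs_mult, ESP.
    replace (2 * d * sin b * cos b) with ((2 * d * sin b) * cos b) by ring.
    rewrite Rabs_mult, (Rabs_right (2 * d * sin b)) by nra. ring. }
  assert (H1 := cos_mul_cos_le gp gq b Hg). fold P in H1.
  assert (H2 := tan_abs_ge a b Ha Hb).
  apply Rmult_le_reg_r with P; [exact HP|].
  assert (0 <= 2 * d * sin a) by nra.
  nra.
Qed.

Section EqualSteps.

Variables (n : nat) (al : R) (th : nat -> R).
Hypothesis n_gt2 : (2 < n)%nat.
Hypothesis al_n : al * INR n = 2 * PI.
Hypothesis th_incr : forall i, (S i < n)%nat -> th i < th (S i).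
Hypothesis th_wrap : th (pred n) < th 0%nat + 2 * PI.
Hypothesis th_step_cos : forall i, (S i < n)%nat -> cos (th (S i) - th i) = cos al.

Lemma th_le_add i m : (i + m < n)%nat -> th i <= th (i + m)%nat.
Proof.
  induction m as [|m IH]; intros Hi.
  - rewrite Nat.add_0_r. lra.
  - replace (i + S m)%nat with (S (i + m)) by lia.
    specialize (IH ltac:(lia)). specialize (th_incr (i + m) ltac:(lia)). lra.
Qed.

Lemma th_step_cases i : (S i < n)%nat ->
  th (S i) - th i = al \/ th (S i) - th i = 2 * PI - al.
Proof.
  intros Hi.
  assert (HnR : 2 < INR n) by (replace 2 with (INR 2) by (simpl; ring); apply lt_INR; lia).
  assert (Hpi := PI_RGT_0).
  apply cos_eq_cases; [nra| |exact (th_step_cos i Hi)].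
  assert (h0 := th_le_add 0 i ltac:(lia)).
  assert (h1 := th_le_add (S i) (pred n - S i) ltac:(lia)).
  replace (S i + (pred n - S i))%nat with (pred n) in h1 by lia.
  specialize (th_incr i Hi). simpl in h0. lra.
Qed.

Lemma th_add_ge i m : (i + m < n)%nat -> INR m * al <= th (i + m)%nat - th i.
Proof.
  assert (HnR : 2 < INR n) by (replace 2 with (INR 2) by (simpl; ring); apply lt_INR; lia).
  assert (Hpi := PI_RGT_0).
  assert (Hal : 0 < al <= PI) by (split; nra).
  induction m as [|m IH]; intros Hi.
  - rewrite Nat.add_0_r. simpl. lra.
  - replace (i + S m)%nat with (S (i + m)) by lia. rewrite S_INR.
    specialize (IH ltac:(lia)).
    destruct (th_step_cases (i + m) ltac:(lia)) as [h|h]; nra.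
Qed.

Lemma th_step_eq i : (S i < n)%nat -> th (S i) - th i = al.
Proof.
  intros Hi. destruct (th_step_cases i Hi) as [h|h]; [exact h|exfalso].
  (* the other n - 2 steps span at least (n - 2) al, overshooting the full turn *)
  assert (h0 := th_add_ge 0 i ltac:(lia)).
  assert (h1 := th_add_ge (S i) (pred n - S i) ltac:(lia)).
  replace (S i + (pred n - S i))%nat with (pred n) in h1 by lia.
  assert (E : INR (pred n - S i) + INR i = INR n - 2).
  { rewrite <- plus_INR. replace (pred n - S i + i)%nat with (n - 2)%nat by lia.
    rewrite minus_INR by lia. simpl. ring. }
  assert (HnR : 3 <= INR n) by (replace 3 with (INR 3) by (simpl; ring); apply le_INR; lia).
  assert (Hpi := PI_RGT_0).
  assert (Hal : 0 < al) by nra.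
  assert (E' : INR (pred n - S i) * al + INR i * al = 2 * PI - 2 * al)
    by (rewrite <- al_n; replace (INR i) with (INR n - 2 - INR (pred n - S i)) by lra; ring).
  simpl in h0. nra.
Qed.

Lemma th_arith_prog i : (i < n)%nat -> th i = th 0%nat + INR i * al.
Proof.
  induction i as [|i IH]; intros Hi.
  - simpl. ring.
  - rewrite S_INR. specialize (IH ltac:(lia)). specialize (th_step_eq i Hi). lra.
Qed.

End EqualSteps.

Lemma equiangular_polar X O : (2 < length X)%nat -> equiangular X O ->
  exists (p : nat -> pt) (rho : nat -> R) (t0 : R),
    (forall x, In x X <-> exists i, (i < length X)%nat /\ p i = x) /\
    (forall i, (i < length X)%nat -> 0 < rho i /\
       p i = polar O (rho i) (t0 + INR i * (2 * (PI / INR (length X))))).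
Proof.
  intros Hn [p [rho [th [Hin [Hpol [Hincr [Hwrap Hang]]]]]]].
  set (n := length X) in *.
  assert (HnR : 0 < INR n) by (apply lt_0_INR; lia).
  assert (Hal : 2 * (PI / INR n) * INR n = 2 * PI) by (field; lra).
  assert (Hcos : forall i, (S i < n)%nat ->
            cos (th (S i) - th i) = cos (2 * (PI / INR n))).
  { intros i Hi. specialize (Hang i ltac:(lia)).
    rewrite (Nat.mod_small (S i) n Hi) in Hang.
    destruct (Hpol i ltac:(lia)) as [Hr1 E1]. destruct (Hpol (S i) Hi) as [Hr2 E2].
    change (p i = polar O (rho i) (th i)) in E1.
    change (p (S i) = polar O (rho (S i)) (th (S i))) in E2.
    rewrite E1, E2, angle_polar in Hang by assumption.
    replace (2 * (PI / INR n)) with (2 * PI / INR n) by (field; lra).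
    rewrite <- Hang, cos_acos by apply COS_bound.
    rewrite <- cos_neg. f_equal. ring. }
  exists p, rho, (th 0%nat). split; [exact Hin|].
  intros i Hi. destruct (Hpol i Hi) as [Hr E]. split; [exact Hr|].
  rewrite E. rewrite (th_arith_prog n _ th Hn Hal Hincr Hwrap Hcos i Hi). reflexivity.
Qed.

Lemma reg_vertex_add_mul n c rad th k m : (0 < n)%nat ->
  reg_vertex n c rad th (k + m * n) = reg_vertex n c rad th k.
Proof.
  intros Hn. unfold reg_vertex.
  assert (Hn' : INR n <> 0) by (apply not_0_INR; lia).
  replace (th + 2 * PI * INR (k + m * n) / INR n)
    with ((th + 2 * PI * INR k / INR n) + 2 * INR m * PI)
    by (rewrite plus_INR, mult_INR; field; exact Hn').
  rewrite cos_period, sin_period. reflexivity.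
Qed.

Lemma reg_vertex_mod_eq n c rad th k l : (0 < n)%nat -> k mod n = l mod n ->
  reg_vertex n c rad th k = reg_vertex n c rad th l.
Proof.
  intros Hn E. pose proof (Nat.div_mod_eq k n). pose proof (Nat.div_mod_eq l n).
  transitivity (reg_vertex n c rad th (k mod n + k / n * n)); [f_equal; lia|].
  rewrite reg_vertex_add_mul, E by exact Hn.
  rewrite <- (reg_vertex_add_mul n c rad th (l mod n) (l / n) Hn). f_equal; lia.
Qed.

Lemma reg_vertex_inj n c rad th i j : 0 < rad -> (i < j)%nat -> (j < n)%nat ->
  reg_vertex n c rad th i <> reg_vertex n c rad th j.
Proof.
  intros Hrad Hij Hj E. unfold reg_vertex in E. injection E as E1 E2.
  set (ti := th + 2 * PI * INR i / INR n) in *.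
  set (tj := th + 2 * PI * INR j / INR n) in *.
  assert (C : cos ti = cos tj) by (apply Rmult_eq_reg_l with rad; lra).
  assert (Sn : sin ti = sin tj) by (apply Rmult_eq_reg_l with rad; lra).
  assert (H1 : cos (tj - ti) = 1).
  { rewrite cos_minus, <- C, <- Sn. pose proof (sin2_cos2 ti) as h. unfold Rsqr in h. lra. }
  assert (HnR : 0 < INR n) by (apply lt_0_INR; lia).
  assert (Hji : 1 <= INR j - INR i)
    by (rewrite <- minus_INR by lia; replace 1 with (INR 1) by (simpl; ring);
        apply le_INR; lia).
  assert (Hjn : INR j < INR n) by (apply lt_INR; lia).
  assert (Hi0 : 0 <= INR i) by apply pos_INR.
  set (y := PI * (INR j - INR i) / INR n).
  assert (Ey : tj - ti = 2 * y) by (unfold tj, ti, y; field; lra).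
  assert (Hpi := PI_RGT_0).
  assert (Hy0 : 0 < y) by (unfold y; apply Rdiv_lt_0_compat; nra).
  assert (Hy1 : y < PI).
  { unfold y. apply Rmult_lt_reg_r with (INR n); [lra|].
    unfold Rdiv. rewrite Rmult_assoc, Rinv_l by lra. nra. }
  rewrite Ey, cos_2a_sin in H1.
  assert (0 < sin y) by (apply sin_gt_0; lra). nra.
Qed.

Lemma pre_regular_full_edges X : (0 < length X)%nat -> pre_regular X ->
  exists c rad th, 0 < rad /\
    forall K, full_edge X c rad th K \/ full_edge X c rad th (S K).
Proof.
  intros Hn [c [rad [th [Hrad Hpre]]]]. exists c, rad, th. split; [exact Hrad|].
  intro K. set (n := length X) in *.
  assert (Hnn : n <> 0%nat) by lia.
  specialize (Hpre (K mod n) (Nat.mod_upper_bound K n Hnn)). cbv zeta in Hpre.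
  set (v := reg_vertex n c rad th) in *.
  assert (Hmod1 : forall k, S (k mod n) mod n = S k mod n).
  { intro k. replace (S (k mod n)) with (k mod n + 1)%nat by lia.
    replace (S k) with (k + 1)%nat by lia. apply Nat.Div0.add_mod_idemp_l. }
  assert (E0 : v (K mod n) = v K)
    by (apply reg_vertex_mod_eq; [lia|apply Nat.Div0.mod_mod]).
  assert (E1 : v (S (K mod n) mod n) = v (S K))
    by (apply reg_vertex_mod_eq; [lia|rewrite Nat.Div0.mod_mod; apply Hmod1]).
  assert (E2 : v (S (S (K mod n) mod n) mod n) = v (S (S K))).
  { apply reg_vertex_mod_eq; [lia|].
    rewrite Nat.Div0.mod_mod, <- (Hmod1 (S K)), <- (Hmod1 K). reflexivity. }
  rewrite E0, E1, E2 in Hpre. unfold full_edge. fold n v. tauto.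
Qed.

Lemma regular_of_vertices_in X c rad th : 0 < rad ->
  (forall k, (k < length X)%nat -> In (reg_vertex (length X) c rad th k) X) ->
  regular X.
Proof.
  intros Hrad Hall. set (n := length X) in *. set (v := reg_vertex n c rad th) in *.
  set (l := map v (seq 0 n)).
  assert (Hl : NoDup l).
  { apply NoDup_map_NoDup_ForallPairs; [|apply seq_NoDup].
    intros i j Hi Hj E. apply in_seq in Hi. apply in_seq in Hj.
    destruct (Nat.lt_trichotomy i j) as [g|[g|g]]; [exfalso| exact g |exfalso].
    - exact (reg_vertex_inj n c rad th i j Hrad g ltac:(lia) E).
    - exact (reg_vertex_inj n c rad th j i Hrad g ltac:(lia) (eq_sym E)). }
  assert (Hincl : incl X l).
  { apply (NoDup_length_incl Hl).
    - unfold l. rewrite length_map, length_seq. lia.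
    - intros x Hx. apply in_map_iff in Hx. destruct Hx as [k [<- Hk]].
      apply in_seq in Hk. apply Hall. lia. }
  exists c, rad, th. split; [exact Hrad|]. intro x. split.
  - intros Hx. apply Hincl, in_map_iff in Hx. destruct Hx as [k [Ek Hk]].
    apply in_seq in Hk. exists k. split; [lia|]. symmetry. exact Ek.
  - intros [k [Hk ->]]. apply Hall. exact Hk.
Qed.

Lemma arith_prog_window (u s y : R) (n : nat) : 0 < s -> (0 < n)%nat ->
  exists K N : nat, y - s < u + INR K * s - INR N * (INR n * s) <= y.
Proof.
  intros Hs Hn.
  set (t := (y - u) / s).
  assert (Ht : t * s = y - u) by (unfold t; field; lra).
  destruct (archimed t) as [A1 A2].
  set (M := (up t - 1)%Z).
  set (N := Z.to_nat (- M)).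
  set (K := Z.to_nat (M + Z.of_nat N * Z.of_nat n)).
  assert (HK : INR K = IZR M + INR N * INR n).
  { unfold K. rewrite INR_IZR_INZ, Z2Nat.id by (unfold N; nia).
    rewrite plus_IZR, mult_IZR, <- !INR_IZR_INZ. reflexivity. }
  assert (HM : IZR M = IZR (up t) - 1) by (unfold M; rewrite minus_IZR; reflexivity).
  exists K, N. rewrite HK, HM. nra.
Qed.

Lemma center_of_dir_coords_nonneg (n : nat) (th : R) (c O : pt) : (4 < n)%nat ->
  (forall K, 0 <= dir_coord (apothem_dir n th K) c O \/
             0 <= dir_coord (apothem_dir n th (S K)) c O) ->
  O = c.
Proof.
  intros Hn H. destruct (classic (O = c)) as [E|Hne]; [exact E|exfalso].
  destruct (polar_of_ne c O Hne) as [r [b [Hr ->]]].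
  set (a := PI / INR n).
  assert (HnR : 4 < INR n) by (replace 4 with (INR 4) by (simpl; ring); apply lt_INR; lia).
  assert (Hpi := PI_RGT_0).
  assert (Ha0 : 0 < a) by (unfold a; apply Rdiv_lt_0_compat; lra).
  assert (HaPI : a * INR n = PI) by (unfold a; field; lra).
  assert (Hdir : forall k : nat, apothem_dir n th k = th + a + INR k * (2 * a))
    by (intro k; unfold apothem_dir, a; field; lra).
  assert (Hneg : forall (k N : nat) e, - (PI / 2) < e < PI / 2 ->
            apothem_dir n th k = b + PI + e + 2 * INR N * PI ->
            dir_coord (apothem_dir n th k) c (polar c r b) < 0).
  { intros k N e He Ek.
    rewrite dir_coord_polar, <- cos_neg, Ek.
    replace (- (b - (b + PI + e + 2 * INR N * PI))) with ((e + PI) + 2 * INR N * PI)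
      by ring.
    rewrite cos_period, neg_cos.
    replace (dir_coord (b + PI + e + 2 * INR N * PI) c c) with 0 by (unfold dir_coord; ring).
    assert (0 < cos e) by (apply cos_gt_0; lra). nra. }
  (* since n > 4, 2 a < PI / 2: both e and e + 2 a below are in (- PI / 2, PI / 2) *)
  destruct (arith_prog_window (th + a) (2 * a) (b + PI) n ltac:(lra) ltac:(lia))
    as [K [N Hw]].
  set (e := apothem_dir n th K - (b + PI) - 2 * INR N * PI).
  assert (He : - (2 * a) < e <= 0) by (unfold e; rewrite Hdir; nra).
  destruct (H K) as [h|h].
  - assert (dir_coord (apothem_dir n th K) c (polar c r b) < 0)
      by (apply (Hneg K N e); [nra|unfold e; ring]). lra.
  - assert (dir_coord (apothem_dir n th (S K)) c (polar c r b) < 0).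
    { apply (Hneg (S K) N (e + 2 * a)); [nra|].
      unfold e. rewrite !Hdir, S_INR. ring. }
    lra.
Qed.

Lemma edge_point_coords n c rad th K t : (0 < n)%nat ->
  let y := seg (reg_vertex n c rad th K) (reg_vertex n c rad th (S K)) t in
  dir_coord (apothem_dir n th K) c y = rad * cos (PI / INR n) /\
  perp_coord (apothem_dir n th K) c y = rad * (2 * t - 1) * sin (PI / INR n).
Proof.
  intros Hn y.
  assert (Hn' : INR n <> 0) by (apply not_0_INR; lia).
  set (a := PI / INR n) in *. set (psi := apothem_dir n th K).
  assert (E1 : th + 2 * PI * INR K / INR n = psi - a)
    by (unfold psi, apothem_dir; fold a; ring).
  assert (E2 : th + 2 * PI * INR (S K) / INR n = psi + a)
    by (unfold psi, apothem_dir, a; rewrite S_INR; field; exact Hn').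
  assert (Hsc := sin2_cos2 psi). unfold Rsqr in Hsc.
  unfold y, seg, reg_vertex, dir_coord, perp_coord. cbn [fst snd]. rewrite E1, E2.
  rewrite cos_minus, sin_minus, cos_plus, sin_plus.
  split.
  - transitivity (rad * cos a * (sin psi * sin psi + cos psi * cos psi)); [ring|].
    rewrite Hsc. ring.
  - transitivity (rad * (2 * t - 1) * sin a * (sin psi * sin psi + cos psi * cos psi));
      [ring|].
    rewrite Hsc. ring.
Qed.

Section PointsOnEdges.

Variables (X : list pt) (O c : pt) (rad th t0 : R) (p : nat -> pt) (rho : nat -> R).
Let n := length X.
Let a := PI / INR n.
Let v := reg_vertex n c rad th.
Hypothesis n_gt4 : (4 < n)%nat.
Hypothesis rad_gt0 : 0 < rad.
Hypothesis X_enum : forall x, In x X <-> exists i, (i < n)%nat /\ p i = x.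
Hypothesis p_polar : forall i, (i < n)%nat ->
  0 < rho i /\ p i = polar O (rho i) (t0 + INR i * (2 * a)).

Lemma half_angle_facts : 0 < a < PI / 2 /\ a * INR n = PI /\ 0 < sin a /\ 0 < cos a.
Proof.
  assert (HnR : 4 < INR n) by (replace 4 with (INR 4) by (simpl; ring); apply lt_INR; lia).
  assert (Hpi := PI_RGT_0).
  assert (Ha0 : 0 < a) by (unfold a; apply Rdiv_lt_0_compat; lra).
  assert (HaPI : a * INR n = PI) by (unfold a; field; lra).
  assert (Ha : 0 < a < PI / 2) by nra.
  split; [exact Ha|]. split; [exact HaPI|].
  split; [apply sin_gt_0 | apply cos_gt_0]; lra.
Qed.

Lemma edge_points_apart K i j ti tj : (j < i)%nat -> (i < n)%nat ->
  p i = seg (v K) (v (S K)) ti -> p j = seg (v K) (v (S K)) tj ->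
  rad * cos a - dir_coord (apothem_dir n th K) c O <= rad * cos a * Rabs (ti - tj).
Proof.
  intros Hji Hi Ei Ej.
  destruct half_angle_facts as [Ha [HaPI [Hsa Hca]]].
  set (psi := apothem_dir n th K). set (d := rad * cos a - dir_coord psi c O).
  destruct (Rle_dec d 0) as [Hd|Hd].
  { assert (0 <= rad * cos a * Rabs (ti - tj))
      by (apply Rmult_le_pos; [nra|apply Rabs_pos]). lra. }
  apply Rnot_le_lt in Hd.
  (* in the frame of the edge, O is at distance d from its line *)
  assert (Hco : forall k t, (k < n)%nat -> p k = seg (v K) (v (S K)) t ->
     rho k * cos (t0 + INR k * (2 * a) - psi) = d /\
     rho k * sin (t0 + INR k * (2 * a) - psi) =
       rad * (2 * t - 1) * sin a - perp_coord psi c O).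
  { intros k t Hk E. destruct (p_polar k Hk) as [_ Ek].
    destruct (edge_point_coords n c rad th K t ltac:(lia)) as [C1 C2].
    fold v a psi in C1, C2.
    rewrite <- E, Ek, dir_coord_polar in C1. rewrite <- E, Ek, perp_coord_polar in C2.
    unfold d. split; lra. }
  destruct (Hco i ti Hi Ei) as [Ci Si]. destruct (Hco j tj ltac:(lia) Ej) as [Cj Sj].
  destruct (p_polar i Hi) as [Hri _]. destruct (p_polar j ltac:(lia)) as [Hrj _].
  assert (Hb : a <= INR (i - j) * a <= PI - a).
  { assert (1 <= INR (i - j))
      by (replace 1 with (INR 1) by (simpl; ring); apply le_INR; lia).
    assert (INR (i - j) + 1 <= INR n) by (rewrite <- S_INR; apply le_INR; lia).
    split; nra. }
  assert (Hchord := chord_tan_bound a (INR (i - j) * a) _ _ _ _ d Ha Hb Hri Hrj Hd Ci Cj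
                      ltac:(rewrite minus_INR by lia; ring)).
  rewrite Si, Sj in Hchord.
  replace (rad * (2 * ti - 1) * sin a - perp_coord psi c O -
           (rad * (2 * tj - 1) * sin a - perp_coord psi c O))
    with ((2 * rad * sin a) * (ti - tj)) in Hchord by ring.
  rewrite Rabs_mult, (Rabs_right (2 * rad * sin a)) in Hchord by nra.
  apply Rmult_le_reg_l with (2 * sin a); [lra|]. nra.
Qed.

Lemma full_edge_apart K : full_edge X c rad th K ->
  exists tp tq, 0 <= tp <= 1 /\ 0 <= tq <= 1 /\
    In (seg (v K) (v (S K)) tp) X /\ In (seg (v K) (v (S K)) tq) X /\
    rad * cos a - dir_coord (apothem_dir n th K) c O <= rad * cos a * Rabs (tp - tq).
Proof.
  intros [x [y [Hxy [Hx [Hy [[tp [Htp Ex]] [[tq [Htq Ey]] _]]]]]]].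
  change (x = seg (v K) (v (S K)) tp) in Ex. change (y = seg (v K) (v (S K)) tq) in Ey.
  exists tp, tq. rewrite <- Ex, <- Ey. do 4 (split; [assumption|]).
  destruct (proj1 (X_enum x) Hx) as [i [Hi Ei]].
  destruct (proj1 (X_enum y) Hy) as [j [Hj Ej]].
  destruct (Nat.lt_trichotomy i j) as [Hij|[Hij|Hij]].
  - rewrite Rabs_minus_sym. apply (edge_points_apart K j i); congruence.
  - subst j. congruence.
  - apply (edge_points_apart K i j); congruence.
Qed.

Lemma full_edge_dir_coord_nonneg K : full_edge X c rad th K ->
  0 <= dir_coord (apothem_dir n th K) c O.
Proof.
  intros Hfull. destruct half_angle_facts as [_ [_ [_ Hca]]].
  destruct (full_edge_apart K Hfull) as [tp [tq [Htp [Htq [_ [_ Hb]]]]]].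
  assert (Rabs (tp - tq) <= 1) by (apply Rabs_le; lra).
  assert (0 < rad * cos a) by nra. nra.
Qed.

Lemma full_edge_ends_in K : O = c -> full_edge X c rad th K ->
  In (v K) X /\ In (v (S K)) X.
Proof.
  intros HOc Hfull. destruct half_angle_facts as [_ [_ [_ Hca]]].
  destruct (full_edge_apart K Hfull) as [tp [tq [Htp [Htq [Hp [Hq Hb]]]]]].
  rewrite HOc in Hb.
  replace (dir_coord (apothem_dir n th K) c c) with 0 in Hb
    by (unfold dir_coord; ring).
  assert (Hab : 1 <= Rabs (tp - tq))
    by (apply Rmult_le_reg_l with (rad * cos a); nra).
  destruct (Rle_dec 0 (tp - tq)) as [g|g].
  - rewrite Rabs_right in Hab by lra.
    replace tp with 1 in Hp by lra. replace tq with 0 in Hq by lra.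
    rewrite seg_1 in Hp. rewrite seg_0 in Hq. tauto.
  - rewrite Rabs_left in Hab by lra.
    replace tp with 0 in Hp by lra. replace tq with 1 in Hq by lra.
    rewrite seg_0 in Hp. rewrite seg_1 in Hq. tauto.
Qed.

Lemma vertices_in : O = c ->
  (forall K, full_edge X c rad th K \/ full_edge X c rad th (S K)) ->
  forall k, In (v k) X.
Proof.
  intros HOc Hfull k.
  assert (E : v (S (k + n - 1)) = v k).
  { unfold v. replace (S (k + n - 1)) with (k + 1 * n)%nat by lia.
    apply reg_vertex_add_mul. lia. }
  rewrite <- E. destruct (Hfull (k + n - 1)%nat) as [h|h].
  - exact (proj2 (full_edge_ends_in _ HOc h)).
  - exact (proj1 (full_edge_ends_in _ HOc h)).
Qed.

End PointsOnEdges.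

Theorem lemma5p12 (X : list pt) (O : pt) (r : R) :
  NoDup X ->
  (4 < length X)%nat ->
  is_SED X O r ->
  (forall p, In p X -> p <> O) ->
  no_common_ray X O ->
  pre_regular X ->
  equiangular X O ->
  regular X.
Proof.
  intros _ Hn4 _ _ _ Hpre Heq.
  destruct (equiangular_polar X O ltac:(lia) Heq) as [p [rho [t0 [Henum Hpol]]]].
  destruct (pre_regular_full_edges X ltac:(lia) Hpre) as [c [rad [th [Hrad Hfull]]]].
  assert (HOc : O = c).
  { apply (center_of_dir_coords_nonneg (length X) th c O Hn4).
    intro K. destruct (Hfull K) as [h|h]; [left|right];
      exact (full_edge_dir_coord_nonneg X O c rad th t0 p rho Hn4 Hrad Henum Hpol _ h). }
  apply (regular_of_vertices_in X c rad th Hrad). intros k _.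
  exact (vertices_in X O c rad th t0 p rho Hn4 Hrad Henum Hpol HOc Hfull k).
Qed.
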